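(* Let $g:\mathbb{R}^n\to\mathbb{R}^n$ be convex, order-preserving and additively homogeneous. Assume that $u\in\mathbb{R}^n$ is harmonic with respect to $g$, i.e. $g(u)=u$. Let $C\subseteq[n]$ be the set of critical nodes of $g$ and $N=[n]\setminus C$. Define $h:\mathbb{R}^N\to\mathbb{R}^N$ by $h(y):=\big(g(\imath_N(y,u_C))\big)_N$, i.e. $h(y)$ is the restriction to $N$ of $g$ applied to the vector whose $N$-coordinates are $y$ and whose $C$-coordinates are those of $u$. Then $h$ has a unique fixed point.
   Context: $[n]=\{1,\dots,n\}$. A map $g:\mathbb{R}^n\to\mathbb{R}^n$ is order-preserving if $x\le y$ (coordinatewise) implies $g(x)\le g(y)$; additively homogeneous if $g(\lambda+x)=\lambda+g(x)$ for all $\lambda\in\mathbb{R}$, $x\in\mathbb{R}^n$ (where $\lambda+x$ adds $\lambda$ to each coordinate); convex if each coordinate $g_i$ is a convex function. A vector $u$ is harmonic for $g$ if $g(u)=u$ and super-harmonic if $g(u)\le u$. The subdifferential of $g$ at $u$ is $\partial g(u)=\{M\in\mathbb{R}^{n\times n}: g(x)-g(u)\ge M(x-u)\ \forall x\in\mathbb{R}^n\}$; for $g$ order-preserving and additively homogeneous its elements are stochastic matrices. For a subset $I\subseteq[n]$ and $x\in\mathbb{R}^n$, $x_I$ is the restriction of $x$ to coordinates in $I$, $M_{IJ}$ the $I\times J$ submatrix of $M$, and for $J=[n]\setminus I$, $\imath_I(y,z)$ denotes the vector of $\mathbb{R}^n$ with $I$-coordinates $y$ and $J$-coordinates $z$.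 A recurrence class of a matrix $M$ is a final communication class $F$ of $M$ (a strongly connected class of the graph of nonzero entries of $M$ with no arc leaving it) such that $M_{FF}$ is stochastic. A node $i\in[n]$ is critical for $g$ (which has harmonic vector $u$) if it belongs to a recurrence class of some $M\in\partial g(u)$; this set does not depend on the choice of the harmonic vector $u$. *)

From HB Require Import structures.
From mathcomp Require Import all_boot all_order all_algebra.
From mathcomp Require Import reals.
Set Implicit Arguments. Unset Strict Implicit. Unset Printing Implicit Defensive.
Import Order.TTheory GRing.Theory Num.Theory.
Local Open Scope ring_scope.

Section Defs.
Variables (R : realType) (n : nat).
Notation vec := ('I_n -> R).

Definition order_preserving (g : vec -> vec) : Prop :=
  forall x y : vec, (forall i, x i <= y i) -> forall i, g x i <= g y i.

Definition additively_homogeneous (g : vec -> vec) : Prop :=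
  forall (l : R) (x : vec) i, g (fun j => l + x j) i = l + g x i.

Definition convex_map (g : vec -> vec) : Prop :=
  forall (x y : vec) (t : R), 0 <= t -> t <= 1 -> forall i,
    g (fun j => t * x j + (1 - t) * y j) i <= t * g x i + (1 - t) * g y i.

Definition subdiff (g : vec -> vec) (u : vec) (M : 'M[R]_n) : Prop :=
  forall (x : vec) i, \sum_(j < n) M i j * (x j - u j) <= g x i - g u i.

Definition mx_graph (M : 'M[R]_n) : rel 'I_n := fun i j => M i j != 0.

Definition comm_class (M : 'M[R]_n) (F : {set 'I_n}) : Prop :=
  exists i, F = [set j | connect (mx_graph M) i j && connect (mx_graph M) j i].

Definition final_class (M : 'M[R]_n) (F : {set 'I_n}) : Prop :=
  comm_class M F /\ forall i j, i \in F -> M i j != 0 -> j \in F.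

Definition stochastic_on (M : 'M[R]_n) (F : {set 'I_n}) : Prop :=
  (forall i j, i \in F -> j \in F -> 0 <= M i j) /\
  (forall i, i \in F -> \sum_(j in F) M i j = 1).

Definition recurrence_class (M : 'M[R]_n) (F : {set 'I_n}) : Prop :=
  final_class M F /\ stochastic_on M F.

Definition critical (g : vec -> vec) (u : vec) (i : 'I_n) : Prop :=
  exists M : 'M[R]_n, subdiff g u M /\
    exists F : {set 'I_n}, recurrence_class M F /\ i \in F.

(* i_N(y, z_C): N-coordinates from y, others from z *)
Definition glue (N : {set 'I_n}) (y : {i : 'I_n | i \in N} -> R) (z : vec) : vec :=
  fun i => match @insub _ (fun k => k \in N) {i : 'I_n | i \in N} i with
           | Some k => y k
           | None => z i
           end.

Definition restr_map (g : vec -> vec) (u : vec) (N : {set 'I_n})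
  (y : {i : 'I_n | i \in N} -> R) : {i : 'I_n | i \in N} -> R :=
  fun k => g (glue y u) (val k).

End Defs.

From Pilot Require Import Defs.
From HB Require Import structures.
From mathcomp Require Import all_boot all_order all_algebra.
From mathcomp Require Import reals boolp classical_sets functions.
From mathcomp Require Import ring lra.
Set Implicit Arguments. Unset Strict Implicit. Unset Printing Implicit Defensive.
Import Order.TTheory GRing.Theory Num.Theory.
Local Open Scope ring_scope.

(* Existence is immediate: u_N is a fixed point of h.  For uniqueness, a fixed
   point z of h gives x = i_N(z, u_C) with g(x)_i = x_i on N and x = u on C.
   Suppose d = x - u has a positive maximum m, attained on S, a subset of N.
   As g(u + 2d) <= u + 2m by monotonicity and homogeneity, each g_i with i in S
   is affine on the segment [u, u + 2d], so a subgradient of g_i at x is also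
   one at u and averages d to m.  These rows form some M in the subdifferential
   of g at u; M is stochastic, so S is closed under M and contains a recurrence
   class of M, i.e. a critical node of N: contradiction.  A negative minimum of d
   is excluded in the same way with any M in the subdifferential, using the
   subgradient inequality at x.  Subgradients of finite convex functions exist
   by the finite-dimensional Hahn-Banach theorem applied to the directional
   derivative, which is sublinear. *)

Section InfImage.
Variables (R : realType) (T : Type) (P : set T) (F : T -> R).

Lemma inf_image_le b t : (forall s, P s -> b <= F s) -> P t ->
  inf [set F s | s in P] <= F t.
Proof.
move=> Fb Pt; apply: ge_inf; last by exists t.
by exists b => _ [s Ps <-]; exact: Fb.
Qed.

Lemma le_inf_image b : (exists t, P t) -> (forall t, P t -> b <= F t) ->
  b <= inf [set F t | t in P].
Proof.
move=> [t Pt] Fb; apply: lb_le_inf; first by exists (F t), t.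
by move=> _ [s Ps <-]; exact: Fb.
Qed.

End InfImage.

Section Sublinear.
Variables (R : realType) (V : lmodType R).

Definition sublinear (q : V -> R) :=
  (forall v w, q (v + w) <= q v + q w) /\
  (forall s v, 0 < s -> q (s *: v) <= s * q v).

Section SublinearTheory.
Variables (q : V -> R) (sq : sublinear q).

Lemma sublinear0 : q 0 = 0.
Proof.
case: sq => qD qZ; have := qD 0 0; have := qZ 2^-1 0; rewrite scaler0 addr0.
rewrite invr_gt0 ltr0n => /(_ isT); lra.
Qed.

Lemma sublinearZ s v : 0 <= s -> q (s *: v) = s * q v.
Proof.
case: sq => _ qZ; rewrite le_eqVlt => /predU1P [<- | s0].
  by rewrite scale0r sublinear0 mul0r.
apply/eqP; rewrite eq_le qZ //=.
have := qZ s^-1 (s *: v); rewrite scalerA mulVf ?gt_eqF // scale1r invr_gt0.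
by move=> /(_ s0); rewrite -(ler_pM2l s0) mulrA mulfV ?gt_eqF // mul1r.
Qed.

Lemma sublinear_addN_ge0 v : 0 <= q v + q (- v).
Proof. by rewrite -sublinear0 -(subrr v); exact: sq.1. Qed.

Lemma sublinear_sum (I : Type) (r : seq I) (P : pred I) (F : I -> V) :
  q (\sum_(i <- r | P i) F i) <= \sum_(i <- r | P i) q (F i).
Proof.
apply: (big_ind2 (fun v b => q v <= b)); first by rewrite sublinear0.
  by move=> v1 b1 v2 b2 h1 h2; apply: le_trans (sq.1 _ _) (lerD h1 h2).
by [].
Qed.

Lemma sublinearZ_le w c : q w + q (- w) <= 0 -> q (c *: w) <= c * q w.
Proof.
move=> qwN; case/orP: (le_total 0 c) => c0; first by rewrite sublinearZ.
rewrite -[c *: w]opprK -scaleNr -scalerN sublinearZ ?oppr_ge0 //.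
by rewrite -mulrNN ler_wpM2l ?oppr_ge0 // lerNr -subr_le0 opprK.
Qed.

End SublinearTheory.

(* The Hahn-Banach extension step: a sublinear minorant of [q] that is linear on
   the line spanned by [w]. *)
Definition flatten_along (w : V) (q : V -> R) (v : V) : R :=
  inf [set q (v + t *: w) - t * q w | t in [set t : R | 0 <= t]].

Section FlattenAlong.
Variables (w : V) (q : V -> R) (sq : sublinear q).

Lemma flatten_along_lb v t : 0 <= t -> - q (- v) <= q (v + t *: w) - t * q w.
Proof.
move=> t0; have := sq.1 (v + t *: w) (- v).
by rewrite addrAC subrr add0r sublinearZ //; lra.
Qed.

Lemma flatten_along_le v t : 0 <= t ->
  flatten_along w q v <= q (v + t *: w) - t * q w.
Proof. by move=> t0; apply: inf_image_le (flatten_along_lb v) _. Qed.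

Lemma le_flatten_along v b :
  (forall t, 0 <= t -> b <= q (v + t *: w) - t * q w) -> b <= flatten_along w q v.
Proof. by apply: le_inf_image; exists 0. Qed.

Lemma flatten_along_le_self v : flatten_along w q v <= q v.
Proof. by have := flatten_along_le v (lexx 0); rewrite scale0r addr0 mul0r subr0. Qed.

Lemma flatten_alongN : flatten_along w q (- w) <= - q w.
Proof.
have := flatten_along_le (- w) ler01.
by rewrite scale1r addNr sublinear0 // mul1r sub0r.
Qed.

Lemma flatten_along_sublinear : sublinear (flatten_along w q).
Proof.
split=> [v1 v2 | s v s0].
- have split_t t1 t2 : 0 <= t1 -> 0 <= t2 -> flatten_along w q (v1 + v2) <=
      (q (v1 + t1 *: w) - t1 * q w) + (q (v2 + t2 *: w) - t2 * q w).
    move=> t10 t20; apply: le_trans (flatten_along_le _ (addr_ge0 t10 t20)) _.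
    rewrite scalerDl addrACA; have := sq.1 (v1 + t1 *: w) (v2 + t2 *: w); lra.
  suff : flatten_along w q (v1 + v2) - flatten_along w q v1 <= flatten_along w q v2.
    lra.
  apply: le_flatten_along => t2 t20.
  suff : flatten_along w q (v1 + v2) - (q (v2 + t2 *: w) - t2 * q w) <=
         flatten_along w q v1 by lra.
  by apply: le_flatten_along => t1 t10; have := split_t t1 t2 t10 t20; lra.
- rewrite -ler_pdivrMl //; apply: le_flatten_along => t t0.
  rewrite ler_pdivrMl //; apply: le_trans (flatten_along_le _ (mulr_ge0 (ltW s0) t0)) _.
  by rewrite -scalerA -scalerDr sublinearZ ?(ltW s0) // mulrBr mulrA.
Qed.

End FlattenAlong.

Definition flatten_along_seq (ws : seq V) (q : V -> R) : V -> R :=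
  foldl (fun r w => flatten_along w r) q ws.

Lemma flatten_along_seq_spec ws q : sublinear q ->
  [/\ sublinear (flatten_along_seq ws q), forall v, flatten_along_seq ws q v <= q v &
      forall w, w \in ws -> flatten_along_seq ws q w + flatten_along_seq ws q (- w) <= 0].
Proof.
elim: ws q => [|w ws IH] q sq /=; first by split.
have [sr r_le r_lin] := IH _ (flatten_along_sublinear w sq).
split=> // [v | w']; first exact: le_trans (r_le v) (flatten_along_le_self w sq v).
rewrite inE => /predU1P [-> | /r_lin //].
have := le_trans (r_le w) (flatten_along_le_self w sq w).
have := le_trans (r_le (- w)) (flatten_alongN w sq); lra.
Qed.

End Sublinear.

Section Coordinates.
Variables (R : realType) (n : nat).

Definition unit_vec (j : 'I_n) : 'I_n -> R^o := fun k => if k == j then 1 else 0.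

Lemma vec_unit_sum (v : 'I_n -> R^o) : v = \sum_j v j *: unit_vec j.
Proof.
apply/funext => k; rewrite fct_sumE (bigD1 k) //= big1 => [|j /negbTE].
  by rewrite scalrfctE /unit_vec eqxx addr0; exact: (esym (mulr1 _)).
by rewrite scalrfctE /unit_vec eq_sym => ->; exact: mulr0.
Qed.

Lemma sublinear_coord (r : ('I_n -> R^o) -> R) : sublinear r ->
  (forall j, r (unit_vec j) + r (- unit_vec j) <= 0) ->
  forall v, r v = \sum_j v j * r (unit_vec j).
Proof.
move=> sr r_lin.
have r_le v : r v <= \sum_j v j * r (unit_vec j).
  rewrite {1}[v]vec_unit_sum; apply: le_trans (sublinear_sum sr _ _ _) _.
  by apply: ler_sum => j _; exact: sublinearZ_le.
move=> v; apply/eqP; rewrite eq_le r_le /=.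
have := r_le (- v); have := sublinear_addN_ge0 sr v.
rewrite (eq_bigr _ (fun j _ => mulNr (v j) _)) sumrN; lra.
Qed.

Lemma sublinear_linear_minorant (q : ('I_n -> R^o) -> R) : sublinear q ->
  exists p : 'I_n -> R, forall v, \sum_j p j * v j <= q v.
Proof.
move=> sq; set r := flatten_along_seq [seq unit_vec j | j <- enum 'I_n] q.
have [sr r_le r_lin] := flatten_along_seq_spec [seq unit_vec j | j <- enum 'I_n] sq.
exists (fun j => r (unit_vec j)) => v.
rewrite (eq_bigr _ (fun j _ => mulrC _ _)) -sublinear_coord //.
by move=> j; apply: r_lin; rewrite map_f ?mem_enum.
Qed.

End Coordinates.

Section DirectionalDerivative.
Variables (R : realType) (V : lmodType R).

Definition convex_fun (f : V -> R) := forall (x y : V) (t : R), 0 <= t -> t <= 1 ->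
  f (t *: x + (1 - t) *: y) <= t * f x + (1 - t) * f y.

Lemma convex_comb_addl (a b c : V) (l : R) :
  l *: (a + b) + (1 - l) *: (a + c) = a + (l *: b + (1 - l) *: c).
Proof. by rewrite !scalerDr addrACA -scalerDl subrKC scale1r. Qed.

Variables (f : V -> R) (x : V).
Hypothesis cf : convex_fun f.

Definition slope (v : V) (t : R) := (f (x + t *: v) - f x) / t.

Lemma slope_le v s t : 0 < s -> s <= t -> slope v s <= slope v t.
Proof.
move=> s0 st; have t0 : 0 < t := lt_le_trans s0 st.
have l0 : 0 <= s / t by rewrite divr_ge0 ?ltW.
have l1 : s / t <= 1 by rewrite ler_pdivrMr // mul1r.
have := cf (x + t *: v) x l0 l1.
rewrite -[x in (1 - _) *: x]addr0 convex_comb_addl scaler0 addr0 scalerA.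
rewrite mulfVK ?gt_eqF //.
by rewrite /slope ler_pdivrMr //; lra.
Qed.

Lemma slope_lb v t : 0 < t -> f x - f (x - v) <= slope v t.
Proof.
move=> t0; have t1 : 0 < 1 + t by rewrite ltr_wpDl.
have l0 : 0 <= (1 + t)^-1 by rewrite invr_ge0 ltW.
have l1 : (1 + t)^-1 <= 1 by rewrite invf_le1 // lerDl ltW.
have := cf (x + t *: v) (x - v) l0 l1.
rewrite convex_comb_addl scalerA scalerN -scalerBl.
have -> : (1 + t)^-1 * t - (1 - (1 + t)^-1) = 0 by field; rewrite gt_eqF.
rewrite scale0r addr0 => /(ler_wpM2l (ltW t1)).
have -> : (1 + t) * ((1 + t)^-1 * f (x + t *: v) + (1 - (1 + t)^-1) * f (x - v)) =
          f (x + t *: v) + t * f (x - v) by field; rewrite gt_eqF.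
by rewrite /slope ler_pdivlMr //; lra.
Qed.

Definition dir_deriv (v : V) : R := inf [set slope v t | t in [set t : R | 0 < t]].

Lemma dir_deriv_le v t : 0 < t -> dir_deriv v <= slope v t.
Proof. by move=> t0; apply: inf_image_le (slope_lb v) _. Qed.

Lemma le_dir_deriv v b : (forall t, 0 < t -> b <= slope v t) -> b <= dir_deriv v.
Proof. by apply: le_inf_image; exists 1. Qed.

Lemma dir_deriv_le_diff v : dir_deriv v <= f (x + v) - f x.
Proof. by have := dir_deriv_le v ltr01; rewrite /slope scale1r divr1. Qed.

Lemma slope_midpoint v w t : 0 < t ->
  slope (v + w) (t / 2) <= slope v t + slope w t.
Proof.
move=> t0; have h0 : 0 <= 2^-1 :> R by rewrite invr_ge0.
have h1 : 2^-1 <= 1 :> R by rewrite invf_le1 ?ler1n.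
have := cf (x + t *: v) (x + t *: w) h0 h1; rewrite convex_comb_addl.
have -> : 1 - 2^-1 = 2^-1 :> R by field.
rewrite -!scalerDr scalerA mulrC => h.
by rewrite /slope invf_div mulrA -mulrDl ler_pM2r ?invr_gt0 //; lra.
Qed.

Lemma dir_deriv_sublinear : sublinear dir_deriv.
Proof.
split=> [v w | s v s0].
- have split_t t1 t2 : 0 < t1 -> 0 < t2 -> dir_deriv (v + w) <= slope v t1 + slope w t2.
    move=> t10 t20; have t0 : 0 < Num.min t1 t2 by rewrite lt_min t10 t20.
    have t0' : 0 < Num.min t1 t2 / 2 by rewrite divr_gt0.
    apply: le_trans (dir_deriv_le _ t0') _.
    apply: le_trans (slope_midpoint _ _ t0) _.
    by apply: lerD; apply: slope_le; rewrite ?ge_min ?lexx ?orbT.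
  suff : dir_deriv (v + w) - dir_deriv v <= dir_deriv w by lra.
  apply: le_dir_deriv => t2 t20.
  suff : dir_deriv (v + w) - slope w t2 <= dir_deriv v by lra.
  by apply: le_dir_deriv => t1 t10; have := split_t t1 t2 t10 t20; lra.
- rewrite -ler_pdivrMl //; apply: le_dir_deriv => t t0.
  rewrite ler_pdivrMl //; apply: le_trans (dir_deriv_le _ (divr_gt0 t0 s0)) _.
  by rewrite /slope scalerA mulfVK ?gt_eqF // invf_div mulrA mulrAC [s * _]mulrC.
Qed.

End DirectionalDerivative.

Section Subgradient.
Variables (R : realType) (n : nat).

Definition subgradient (f : ('I_n -> R) -> R) (x p : 'I_n -> R) :=
  forall y, \sum_j p j * (y j - x j) <= f y - f x.

Lemma convex_subgradient (f : ('I_n -> R^o) -> R) (x : 'I_n -> R^o) :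
  convex_fun f -> exists p, subgradient f x p.
Proof.
move=> cf; have [p hp] := sublinear_linear_minorant (dir_deriv_sublinear x cf).
exists p => y; apply: le_trans (hp (y - x)) _.
by have := dir_deriv_le_diff x cf (y - x); rewrite subrKC.
Qed.

Lemma subgradient_transfer f (u x p : 'I_n -> R) : subgradient f x p ->
  f (x + (x - u)) - f x <= f x - f u ->
  subgradient f u p /\ f x - f u <= \sum_j p j * (x j - u j).
Proof.
move=> hp hf.
have lo : f x - f u <= \sum_j p j * (x j - u j).
  have := hp u; rewrite (eq_bigr (fun j => - (p j * (x j - u j)))) => [|j _].
    by rewrite sumrN; lra.
  by rewrite -mulrN opprB.
have hi : \sum_j p j * (x j - u j) <= f (x + (x - u)) - f x.
  have := hp (x + (x - u)); rewrite (eq_bigr (fun j => p j * (x j - u j))) //.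
  by move=> j _; rewrite addrfctE /= addrAC subrr add0r.
split=> // y; rewrite (eq_bigr (fun j => p j * (y j - x j) + p j * (x j - u j))).
  by rewrite big_split /=; have := hp y; lra.
by move=> j _; rewrite -mulrDr addrA subrK.
Qed.

End Subgradient.

Lemma weighted_mean_ge_max (R : realType) (n : nat) (w e : 'I_n -> R) (m : R) :
  (forall k, 0 <= w k) -> \sum_k w k = 1 -> (forall k, e k <= m) ->
  m <= \sum_k w k * e k -> forall k, w k != 0 -> e k = m.
Proof.
move=> w0 w1 em mle k wk.
have gap0 j : 0 <= w j * (m - e j) by rewrite mulr_ge0 ?subr_ge0.
have : \sum_j w j * (m - e j) = 0.
  apply/eqP; rewrite eq_le sumr_ge0 // andbT.
  under eq_bigr do rewrite mulrBr.
  by rewrite sumrB -mulr_suml w1 mul1r subr_le0.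
move=> /(psumr_eq0P (fun j _ => gap0 j)) /(_ k isT) /eqP.
by rewrite mulf_eq0 (negbTE wk) subr_eq0 => /eqP.
Qed.

Lemma exists_pos_argmax (R : realType) (n : nat) (e : 'I_n -> R) i :
  0 < e i -> exists2 j, 0 < e j & forall k, e k <= e j.
Proof.
move=> ei; have [j _ emax] := @arg_maxP _ _ _ i xpredT e isT.
by exists j => [|k]; [exact: lt_le_trans ei (emax i isT) | exact: emax].
Qed.

(* A node reachable from i0 whose reachable set is smallest reaches back every
   node it reaches, so its strongly connected class is final. *)
Lemma closed_recurrence_class (R : realType) (n : nat) (M : 'M[R]_n)
    (S : {set 'I_n}) i0 :
  (forall i j, 0 <= M i j) -> (forall i, \sum_j M i j = 1) ->
  (forall i j, i \in S -> M i j != 0 -> j \in S) -> i0 \in S ->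
  exists2 j, j \in S & exists2 F, recurrence_class M F & j \in F.
Proof.
move=> M0 M1 S_closed i0S; set e := mx_graph M.
have S_connect i j : connect e i j -> i \in S -> j \in S.
  move=> /connectP [p + ->]; elim: p i => //= a p IH i /andP [eia pth] iS.
  exact: IH pth (S_closed _ _ iS eia).
pose reach j := [set k | connect e j k].
have [j0 i0j0 j0min] := arg_minnP (fun j => #|reach j|) (connect0 e i0).
exists j0; first exact: S_connect i0j0 i0S.
set F := [set k | connect e j0 k && connect e k j0].
have F_final i j : i \in F -> M i j != 0 -> j \in F.
  rewrite !inE => /andP [j0i ij0] Mij.
  have j0j : connect e j0 j := connect_trans j0i (connect1 (Mij : e i j)).
  have reach_sub : reach j \subset reach j0.
    by apply/fintype.subsetP => k; rewrite !inE; exact: connect_trans j0j.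
  have /eqP reach_eq : reach j == reach j0.
    by rewrite eqEcard reach_sub j0min // (connect_trans i0j0 j0j).
  have : j0 \in reach j by rewrite reach_eq inE connect0.
  by rewrite inE j0j.
exists F; last by rewrite inE connect0.
split; first by split=> //; exists j0.
split=> [i j _ _ | i iF]; first exact: M0.
rewrite -(M1 i) [RHS](bigID (mem F)) /= [X in _ = _ + X]big1 ?addr0 //.
by move=> j jF; apply/eqP; apply: contraNT jF; exact: F_final.
Qed.

Section Glue.
Variables (R : realType) (n : nat) (N : {set 'I_n}).

Lemma glue_val (y : {i : 'I_n | i \in N} -> R) (z : 'I_n -> R)
    (k : {i : 'I_n | i \in N}) :
  Defs.glue y z (val k) = y k.
Proof. by rewrite /Defs.glue valK. Qed.

Lemma glue_out (y : {i : 'I_n | i \in N} -> R) (z : 'I_n -> R) i :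
  i \notin N -> Defs.glue y z i = z i.
Proof. by move=> iN; rewrite /Defs.glue insubN. Qed.

Lemma glue_restr (z : 'I_n -> R) :
  Defs.glue (fun k : {i : 'I_n | i \in N} => z (val k)) z = z.
Proof. by apply/funext => i; rewrite /Defs.glue; case: insubP => // k _ <-. Qed.

End Glue.

Section NoncriticalFixedPoint.
Variables (R : realType) (n : nat) (g : ('I_n -> R) -> 'I_n -> R) (u : 'I_n -> R).
Hypotheses (cg : convex_map g) (mono : order_preserving g)
  (hom : additively_homogeneous g).

Lemma convex_map_coord i : convex_fun (fun y : 'I_n -> R^o => g y i).
Proof. by move=> x y t t0 t1; exact: cg. Qed.

Lemma subdiff_ge0 M : subdiff g u M -> forall i j, 0 <= M i j.
Proof.
move=> sd i j; have := sd (fun k => u k - (k == j)%:R) i.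
rewrite (eq_bigr (fun k => - (M i k * (k == j)%:R))); last first.
  by move=> k _; rewrite addrAC subrr add0r mulrN.
rewrite sumrN (bigD1 j) //= eqxx mulr1 big1 ?addr0 => [|k /negbTE ->]; last first.
  by rewrite mulr0.
have : g (fun k => u k - (k == j)%:R) i <= g u i.
  by apply: mono => k; rewrite lerBlDr lerDl ler0n.
lra.
Qed.

Lemma subdiff_rowsum M : subdiff g u M -> forall i, \sum_j M i j = 1.
Proof.
move=> sd i.
have shift l : l * \sum_j M i j <= l.
  have := sd (fun k => l + u k) i; rewrite hom addrK mulr_sumr.
  by under eq_bigr do rewrite addrK mulrC.
by have := shift 1; have := shift (-1); lra.
Qed.

Lemma subdiff_of_rows (P : 'I_n -> ('I_n -> R) -> Prop) :
  (forall i, exists p, subgradient (fun y => g y i) u p /\ P i p) ->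
  exists M, subdiff g u M /\ forall i, P i (fun j => M i j).
Proof.
move=> /fin_all_exists [p hp]; exists (\matrix_(i, j) p i j).
split=> [y i | i]; first by under eq_bigr do rewrite mxE; exact: (hp i).1.
have -> : (fun j => (\matrix_(i, j) p i j) i j) = p i by apply/funext => j; rewrite mxE.
exact: (hp i).2.
Qed.

Lemma subdiff_nonempty : exists M, subdiff g u M.
Proof.
have rows i : exists p, subgradient (fun y => g y i) u p /\ True.
  by have [p hp] := convex_subgradient u (convex_map_coord i); exists p.
by have [M [sd _]] := subdiff_of_rows rows; exists M.
Qed.

Variable N : {set 'I_n}.
Hypothesis N_noncritical : forall i, i \in N -> ~ critical g u i.

Lemma top_level_not_closed M (e : 'I_n -> R) j0 : subdiff g u M -> 0 < e j0 ->
  (forall k, e k <= e j0) -> (forall k, k \notin N -> e k = 0) ->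
  ~ (forall i, e i = e j0 -> e j0 <= \sum_k M i k * e k).
Proof.
move=> sd ej0 emax e_out top_row; set S := [set i | e i == e j0].
have S_N i : i \in S -> i \in N.
  rewrite inE => /eqP ei; apply: contraTT ej0 => /e_out e0.
  by rewrite -ei e0 ltxx.
have S_closed i k : i \in S -> M i k != 0 -> k \in S.
  rewrite !inE => /eqP ei Mik; apply/eqP.
  exact: (weighted_mean_ge_max (subdiff_ge0 sd i) (subdiff_rowsum sd i) emax
                               (top_row i ei)).
have j0S : j0 \in S by rewrite inE.
have [j jS [F rF jF]] :=
  closed_recurrence_class (subdiff_ge0 sd) (subdiff_rowsum sd) S_closed j0S.
by apply: (N_noncritical (S_N j jS)); exists M; split=> //; exists F.
Qed.

Hypothesis gu : forall i, g u i = u i.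
Variable x : 'I_n -> R.
Hypotheses (x_out : forall i, i \notin N -> x i = u i)
  (x_fix : forall i, i \in N -> g x i = x i).

Lemma mem_N_of_ne i : x i != u i -> i \in N.
Proof. by apply: contraR => /x_out ->. Qed.

Lemma noncritical_fixed_le i : x i <= u i.
Proof.
rewrite leNgt; apply/negP => ltux; set e := fun k => x k - u k.
have /exists_pos_argmax [j0 m0 emax] : 0 < e i by rewrite subr_gt0.
set m := e j0 in m0 emax *.
have e_out k : k \notin N -> e k = 0 by move=> /x_out; rewrite /e => ->; rewrite subrr.
have rows k : exists p, subgradient (fun y => g y k) u p /\
    (e k = m -> m <= \sum_j p j * e j).
  have [ekm | ekm] := eqVneq (e k) m; last first.
    have [p hp] := convex_subgradient u (convex_map_coord k).
    by exists p; split=> // ekm'; rewrite ekm' eqxx in ekm.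
  have kN : k \in N by apply: mem_N_of_ne; rewrite -subr_eq0 -/(e k) ekm gt_eqF.
  have [p hp] := convex_subgradient x (convex_map_coord k).
  have bound : g (x + (x - u)) k - g x k <= g x k - g u k.
    have : g (x + (x - u)) k <= g (fun j => (m + m) + u j) k.
      apply: mono => j; have := emax j; rewrite /m /e !addrfctE opprfctE /=; lra.
    rewrite hom gu x_fix //; move: ekm; rewrite /e /=; lra.
  have [p_u p_exact] := subgradient_transfer hp bound.
  by exists p; split=> // _; move: p_exact; rewrite x_fix // gu -/(e k) ekm.
have [M [sd top_row]] := subdiff_of_rows rows.
exact: top_level_not_closed sd m0 emax e_out top_row.
Qed.

Lemma noncritical_fixed_ge i : u i <= x i.
Proof.
rewrite leNgt; apply/negP => ltxu; set e := fun k => u k - x k.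
have /exists_pos_argmax [j0 m0 emax] : 0 < e i by rewrite subr_gt0.
set m := e j0 in m0 emax *.
have e_out k : k \notin N -> e k = 0 by move=> /x_out; rewrite /e => ->; rewrite subrr.
have [M sd] := subdiff_nonempty.
apply: (top_level_not_closed sd m0 emax e_out) => k ekm.
have kN : k \in N by apply: mem_N_of_ne; rewrite eq_sym -subr_eq0 -/(e k) ekm gt_eqF.
have -> : \sum_j M k j * e j = - \sum_j M k j * (x j - u j).
  by rewrite -sumrN; apply: eq_bigr => j _; rewrite -mulrN opprB.
by have := sd x k; move: ekm; rewrite x_fix // gu /e; lra.
Qed.

Lemma noncritical_fixed_eq : x = u.
Proof.
by apply/funext => i; apply/eqP; rewrite eq_le noncritical_fixed_le noncritical_fixed_ge.
Qed.

End NoncriticalFixedPoint.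

Theorem lemma3p1 (R : realType) (n : nat) (g : ('I_n -> R) -> ('I_n -> R))
  (u : 'I_n -> R) (N : {set 'I_n}) :
  convex_map g -> order_preserving g -> additively_homogeneous g ->
  (forall i, g u i = u i) ->
  (forall i, i \in N <-> ~ critical g u i) ->
  exists y : {i : 'I_n | i \in N} -> R,
    (forall k, restr_map g u y k = y k) /\
    (forall z : {i : 'I_n | i \in N} -> R,
       (forall k, restr_map g u z k = z k) -> forall k, z k = y k).
Proof.
move=> cg mono hom gu N_crit.
exists (fun k => u (val k)); split=> [k | z z_fix k].
  by rewrite /restr_map glue_restr gu.
have x_fix i : i \in N -> g (Defs.glue z u) i = Defs.glue z u i.
  move=> iN; have := z_fix (exist _ i iN); rewrite /restr_map /= => ->.
  exact: esym (glue_val z u (exist _ i iN)).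
have x_out i : i \notin N -> Defs.glue z u i = u i by exact: glue_out.
have := noncritical_fixed_eq cg mono hom (fun i => (N_crit i).1) gu x_out x_fix.
by rewrite -(glue_val z u k) => ->.
Qed.
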